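(* Let $G=(V,E)$ be a connected graph on $V=\{1,\dots,n\}$ with incidence matrix $B$ and Laplacian $L=BB^T$. For every $\Delta\in\mathbb{R}^{|E|}$ and all $i,j\in V$, $$\left|\Delta^TB^TL^\dagger(e_i-e_j)\right|\le\|\Delta\|_\infty\sqrt{\Omega_{ij}\,|E_{ij}|}.$$
   Context: Each edge of $G$ is given an arbitrary orientation; $B\in\mathbb{R}^{n\times|E|}$ has, in the column of edge $(a,b)$, $+1$ in row $a$, $-1$ in row $b$ and zeros elsewhere. $L^\dagger$ is the Moore–Penrose pseudoinverse of $L$. $\Omega_{ij}=(e_i-e_j)^TL^\dagger(e_i-e_j)$ is the effective resistance between $i$ and $j$ when every edge is a unit resistor. $E_{ij}$ is the set of edges lying on at least one simple path from $i$ to $j$. *)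

From mathcomp Require Import all_boot all_order all_algebra.
Set Implicit Arguments. Unset Strict Implicit. Unset Printing Implicit Defensive.
Import Order.TTheory GRing.Theory Num.Theory.
Local Open Scope ring_scope.

(* A graph on vertices 'I_n with m edges; edge e is oriented from
   src e to tgt e (arbitrary orientation). *)

Definition simple_graph n m (src tgt : 'I_m -> 'I_n) : Prop :=
  (forall e, src e != tgt e) /\
  (forall e f, [set src e; tgt e] = [set src f; tgt f] -> e = f).

Definition adj n m (src tgt : 'I_m -> 'I_n) : rel 'I_n :=
  fun u v => [exists e, ((src e == u) && (tgt e == v)) || ((src e == v) && (tgt e == u))].

Definition connected_graph n m (src tgt : 'I_m -> 'I_n) : Prop :=
  forall u v : 'I_n, connect (adj src tgt) u v.

Definition incidence n m (R : nzRingType) (src tgt : 'I_m -> 'I_n) : 'M[R]_(n, m) :=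
  \matrix_(v, e) ((v == src e)%:R - (v == tgt e)%:R).

Definition laplacian n m (R : nzRingType) (src tgt : 'I_m -> 'I_n) : 'M[R]_n :=
  incidence R src tgt *m (incidence R src tgt)^T.

Definition is_MP_pinv (R : numFieldType) n (A X : 'M[R]_n) : Prop :=
  [/\ A *m X *m A = A, X *m A *m X = X,
      (A *m X)^T = A *m X & (X *m A)^T = X *m A].

Definition basis_vec (R : nzRingType) n (i : 'I_n) : 'cV[R]_n := delta_mx i 0.

Definition eff_res (R : numFieldType) n (Ldag : 'M[R]_n) (i j : 'I_n) : R :=
  ((basis_vec R i - basis_vec R j)^T *m Ldag *m (basis_vec R i - basis_vec R j)) 0 0.

Definition simple_path n m (src tgt : 'I_m -> 'I_n) (i j : 'I_n) (p : seq 'I_n) : bool :=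
  [&& path (adj src tgt) i p, uniq (i :: p) & last i p == j].

Definition edge_on n m (src tgt : 'I_m -> 'I_n) (e : 'I_m) (s : seq 'I_n) : bool :=
  has (fun uv : 'I_n * 'I_n =>
         ((uv.1 == src e) && (uv.2 == tgt e)) || ((uv.1 == tgt e) && (uv.2 == src e)))
      (zip s (behead s)).

Definition path_edges n m (src tgt : 'I_m -> 'I_n) (i j : 'I_n) : {set 'I_m} :=
  [set e | [exists k : 'I_n, exists p : k.-tuple 'I_n,
              simple_path src tgt i j p && edge_on src tgt e (i :: p)]].
(* Note: a simple path i :: p has uniq (i :: p), hence size p < n, so
   quantifying over tuples of length k < n covers all simple paths. *)

Definition inf_norm (R : numDomainType) m (x : 'cV[R]_m) : R :=
  \big[Num.max/0]_(k < m) `|x k 0|.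

From mathcomp Require Import all_boot all_order all_algebra.
From mathcomp Require Import ring.
Import Order.TTheory GRing.Theory Num.Theory.
Local Open Scope ring_scope.

(* Since [e_i - e_j] is orthogonal to the kernel of [L] (the constants, the
   graph being connected), the potential [x = L^+ (e_i - e_j)] solves
   [L x = e_i - e_j], and [f = B^T x] is the unit electrical flow from [i] to
   [j], with [Omega_ij = x^T L x = sum_e f_e^2].  The potential is harmonic
   away from [i] and [j], so from the ends of any edge carrying current one can
   climb to [i] and descend to [j]; potentials strictly decrease along the
   resulting walk, which is therefore a simple path, so [f] is supported on
   [E_ij].  Hence [|Delta^T f| <= |Delta|_oo sum_(E_ij) |f_e|], and
   Cauchy-Schwarz bounds the last sum by [sqrt (|E_ij| Omega_ij)]. *)

Set Implicit Arguments.
Unset Strict Implicit.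
Unset Printing Implicit Defensive.

Lemma dotmx_self (R : pzSemiRingType) m (v : 'cV[R]_m) :
  (v^T *m v) 0 0 = \sum_k v k 0 ^+ 2.
Proof. by rewrite mxE; apply: eq_bigr => k _; rewrite mxE expr2. Qed.

Section RealMatrices.
Variable R : realFieldType.

Lemma dotmx_self_eq0 m (v : 'cV[R]_m) : v^T *m v = 0 -> v = 0.
Proof.
move/matrixP/(_ 0 0); rewrite dotmx_self mxE => /psumr_eq0P v0.
apply/matrixP => k l; rewrite (ord1 l) mxE.
by apply/eqP; rewrite -sqrf_eq0 v0 // => i _; apply: sqr_ge0.
Qed.

Lemma mulmx_trmx_eq0 n p (A : 'M[R]_(n, p)) (z : 'cV[R]_n) :
  A *m A^T *m z = 0 -> A^T *m z = 0.
Proof.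
move=> AATz; apply: dotmx_self_eq0.
by rewrite trmx_mul trmxK mulmxA -(mulmxA _ A) -mulmxA AATz mulmx0.
Qed.

(* [A *m X] is the orthogonal projection onto the range of [A], which is the
   orthogonal complement of the kernel of [A^T]. *)
Lemma mulmx_pinv_id n p (A : 'M[R]_(n, p)) (X : 'M[R]_(p, n)) (d : 'cV[R]_n) :
  A *m X *m A = A -> (A *m X)^T = A *m X ->
  (forall z : 'cV[R]_n, A^T *m z = 0 -> z^T *m d = 0) ->
  A *m X *m d = d.
Proof.
move=> AXA AXsym dperp; set z := d - A *m X *m d.
have AXz : A *m X *m z = 0 by rewrite mulmxBr !mulmxA AXA subrr.
have ATz : A^T *m z = 0.
  by rewrite -{1}AXA trmx_mul AXsym -mulmxA AXz mulmx0.
have zz : z^T *m z = 0.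
  rewrite {2}/z mulmxBr (dperp _ ATz) -AXsym mulmxA -trmx_mul AXz.
  by rewrite trmx0 mul0mx subrr.
by apply/eqP; rewrite eq_sym -subr_eq0 -/z (dotmx_self_eq0 zz).
Qed.

Lemma sqr_sum_le_card (I : finType) (S : {pred I}) (a : I -> R) :
  (\sum_(e in S) a e) ^+ 2 <= #|S|%:R * \sum_(e in S) a e ^+ 2.
Proof.
set A := \sum_(e in S) a e; set T := \sum_(e in S) a e ^+ 2.
have sum_sqr_diff : \sum_(e in S) \sum_(f in S) (a e - a f) ^+ 2
                    = (#|S|%:R * T - A ^+ 2) *+ 2.
  under eq_bigr => e _.
    under eq_bigr do rewrite sqrrB.
    rewrite !big_split /= sumrN sumr_const sumrMnl -mulr_sumr -/A -/T.
    over.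
  rewrite !big_split /= sumrN sumr_const !sumrMnl -mulr_suml -/A -/T.
  by ring.
have : 0 <= \sum_(e in S) \sum_(f in S) (a e - a f) ^+ 2.
  by do 2!apply: sumr_ge0 => ? _; apply: sqr_ge0.
by rewrite sum_sqr_diff pmulrn_lge0 // subr_ge0.
Qed.

End RealMatrices.

Lemma sum_norm_le_sqrt (R : rcfType) (I : finType) (S : {pred I}) (a : I -> R) :
  \sum_(e in S) `|a e| <= Num.sqrt (#|S|%:R * \sum_(e in S) a e ^+ 2).
Proof.
have sum_ge0 : 0 <= \sum_(e in S) `|a e| by apply: sumr_ge0.
rewrite -(ger0_norm sum_ge0) -sqrtr_sqr ler_wsqrtr //.
under [X in _ <= _ * X]eq_bigr do rewrite -(real_normK (num_real (a _))).
exact: sqr_sum_le_card.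
Qed.

Section Graph.
Variables (n m : nat) (src tgt : 'I_m -> 'I_n).
Local Notation adjG := (adj src tgt).

Lemma adj_sym : symmetric adjG.
Proof.
by move=> u v; apply/existsP/existsP => -[e uv]; exists e; rewrite orbC.
Qed.

Lemma incidence_trmx_mulE (R : nzRingType) (g : 'cV[R]_n) e :
  ((incidence R src tgt)^T *m g) e 0 = g (src e) 0 - g (tgt e) 0.
Proof.
rewrite mxE; under eq_bigr do rewrite !mxE mulrBl !mulr_natl !mulrb.
by rewrite sumrB -!big_mkcond !big_pred1_eq.
Qed.

Lemma laplacian_mulE (R : nzRingType) (g : 'cV[R]_n) w :
  (laplacian R src tgt *m g) w 0 =
  \sum_e ((w == src e)%:R * (g w 0 - g (tgt e) 0)
          + (w == tgt e)%:R * (g w 0 - g (src e) 0)).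
Proof.
rewrite -mulmxA mxE; apply: eq_bigr => e _; rewrite incidence_trmx_mulE mxE.
case: (eqVneq w (src e)) => [->|_]; case: (eqVneq _ (tgt e)) => [<-|_] /=;
  by rewrite ?subrr ?mulr0 ?mul0r ?addr0 ?add0r ?subr0 ?sub0r ?mulN1r ?opprB
             ?mul1r.
Qed.

Lemma trmx_laplacian (R : comNzRingType) :
  (laplacian R src tgt)^T = laplacian R src tgt.
Proof. by rewrite /laplacian trmx_mul trmxK. Qed.

Lemma laplacian_quad (R : comNzRingType) (x : 'cV[R]_n) :
  x^T *m laplacian R src tgt *m x
  = ((incidence R src tgt)^T *m x)^T *m ((incidence R src tgt)^T *m x).
Proof. by rewrite trmx_mul trmxK !mulmxA. Qed.

Lemma incidence_ker_const (R : nzRingType) (z : 'cV[R]_n) :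
  connected_graph src tgt -> (incidence R src tgt)^T *m z = 0 ->
  forall a b, z a 0 = z b 0.
Proof.
move=> connected Bz.
have adj_eq u v : adjG u v -> z u 0 = z v 0.
  case/existsP=> e /orP[] /andP[/eqP <- /eqP <-]; [|apply: esym];
  by apply/eqP; rewrite -subr_eq0 -incidence_trmx_mulE Bz mxE.
move=> a b; have /connectP[p ap ->] := connected a b.
by elim: p a ap => [|c p IH] a //= /andP[/adj_eq -> /IH].
Qed.

Lemma laplacian_ker_orth (R : realFieldType) (z : 'cV[R]_n) i j :
  connected_graph src tgt -> laplacian R src tgt *m z = 0 ->
  z^T *m (basis_vec R i - basis_vec R j) = 0.
Proof.
move=> connected /mulmx_trmx_eq0 /(incidence_ker_const connected) zconst.
rewrite /basis_vec mulmxBr -!colE -!tr_row; apply/eqP; rewrite subr_eq0.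
by apply/eqP; congr trmx; apply/rowP => k; rewrite !mxE (ord1 k) (zconst i j).
Qed.

Section Descent.
Variables (R : realFieldType) (g : 'cV[R]_n).
Local Notation Lg w := ((laplacian R src tgt *m g) w 0).

Definition downhill : rel 'I_n := fun a b => adjG a b && (g b 0 < g a 0).

Lemma laplacian_mul_lt0_at_min w u :
  (forall y, adjG w y -> g w 0 <= g y 0) -> adjG w u -> g w 0 < g u 0 ->
  Lg w < 0.
Proof.
move=> w_min /existsP[e0 e0_wu] wu; rewrite laplacian_mulE (bigD1 e0) //=.
have half_le0 (b : bool) y : (b -> adjG w y) -> b%:R * (g w 0 - g y 0) <= 0.
  by case: b => [/(_ isT) /w_min|_]; rewrite ?mul1r ?subr_le0 ?mul0r.
have adj_tgt e : w == src e -> adjG w (tgt e).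
  by move=> /eqP ->; apply/existsP; exists e; rewrite !eqxx.
have adj_src e : w == tgt e -> adjG w (src e).
  by move=> /eqP ->; apply/existsP; exists e; rewrite !eqxx orbT.
rewrite -[X in _ < X](addr0 0); apply: ltr_leD; last first.
  apply: sumr_le0 => e _; rewrite -[X in _ <= X](addr0 0).
  by apply: lerD; apply: half_le0; [apply: adj_tgt | apply: adj_src].
have w_ne_u : w != u by apply: contraTneq wu => ->; rewrite ltxx.
case/orP: e0_wu => /andP[/eqP s0 /eqP t0]; rewrite s0 t0 eqxx (negbTE w_ne_u).
- by rewrite mul1r mul0r addr0 subr_lt0.
- by rewrite mul0r add0r mul1r subr_lt0.
Qed.

Lemma exists_downhill_step u w :
  0 <= Lg w -> downhill u w -> exists y, downhill w y.
Proof.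
move=> Lg_ge0 /andP[uw wu].
have [/existsP //|/existsPn no_step] := boolP [exists y, downhill w y].
have w_min y : adjG w y -> g w 0 <= g y 0.
  by move=> wy; move: (no_step y); rewrite /downhill wy leNgt.
have := laplacian_mul_lt0_at_min w_min (etrans (adj_sym w u) uw) wu.
by rewrite ltNge Lg_ge0.
Qed.

Lemma downhill_entered u w y :
  downhill u w -> connect downhill w y -> exists z, downhill z y.
Proof.
move=> uw /connectP[p wp ->]; case/lastP: p wp => [_|q z]; first by exists u.
by rewrite rcons_path last_rcons => /andP[_ qz]; exists (last w q).
Qed.

(* A minimum of [g] among the vertices reachable downhill from [w] has no
   downhill step; since it was entered from above, [Lg] is negative there. *)
Lemma connect_downhill_sink t u w :
  (forall y, y != t -> 0 <= Lg y) -> downhill u w -> connect downhill w t.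
Proof.
move=> Lg_ge0 uw.
case: (@arg_minP _ _ _ w (connect downhill w) (fun y => g y 0) (connect0 _ _)).
move=> y wy y_min; have [<- //|yt] := eqVneq y t.
have [z zy] := downhill_entered uw wy.
have [y' yy'] := exists_downhill_step (Lg_ge0 y yt) zy.
have := y_min y' (connect_trans wy (connect1 yy')).
by case/andP: yy' => _; rewrite leNgt => ->.
Qed.

Lemma downhill_path_uniq a p : path downhill a p -> uniq (a :: p).
Proof.
move=> ap; apply: (@sorted_uniq _ (fun x y => g y 0 < g x 0)).
- by move=> ? ? ? yx zy; apply: lt_trans zy yx.
- by move=> x; rewrite /= ltxx.
- by apply: sub_path ap => x y /andP[].
Qed.

End Descent.

Lemma downhill_opp (R : realFieldType) (g : 'cV[R]_n) a b :
  downhill (- g) a b = downhill g b a.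
Proof. by rewrite /downhill adj_sym !mxE ltrN2. Qed.

Lemma connect_downhill_source (R : realFieldType) (g : 'cV[R]_n) s u w :
  (forall y, y != s -> (laplacian R src tgt *m g) y 0 <= 0) ->
  downhill g w u -> connect (downhill g) s w.
Proof.
move=> Lg_le0 wu.
have -> : connect (downhill g) s w = connect (downhill (- g)) w s.
  rewrite -[LHS](connect_rev _ w s).
  by apply: eq_connect => a b; rewrite /= downhill_opp.
apply: (@connect_downhill_sink _ (- g) s u) => [y ys|].
  by rewrite mulmxN mxE oppr_ge0 Lg_le0.
by rewrite downhill_opp.
Qed.

Lemma mem_path_edges i j e p :
  simple_path src tgt i j p -> edge_on src tgt e (i :: p) ->
  e \in path_edges src tgt i j.
Proof.
move=> ijp ep; have /and3P[_ uniq_ip _] := ijp.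
have size_p : (size p < n)%N.
  by have := max_card (mem (i :: p)); rewrite card_ord (card_uniqP uniq_ip).
rewrite inE; apply/existsP; exists (Ordinal size_p).
by apply/existsP; exists (in_tuple p); rewrite ijp ep.
Qed.

Lemma edge_on_cat e a q v p :
  ((last a q == src e) && (v == tgt e))
    || ((last a q == tgt e) && (v == src e)) ->
  edge_on src tgt e (a :: q ++ v :: p).
Proof.
by rewrite /edge_on; elim: q a => [|b q IH] a /= e_qv; rewrite ?e_qv ?IH ?orbT.
Qed.

Lemma downhill_mem_path_edges (R : realFieldType) (g : 'cV[R]_n) i j u v e :
  connect (downhill g) i u -> downhill g u v -> connect (downhill g) v j ->
  ((u == src e) && (v == tgt e)) || ((u == tgt e) && (v == src e)) ->
  e \in path_edges src tgt i j.
Proof.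
move=> /connectP[q iq ->] uv /connectP[p vp ->] e_uv.
have iqvp : path (downhill g) i (q ++ v :: p) by rewrite cat_path iq /= uv vp.
apply: (@mem_path_edges _ _ _ (q ++ v :: p)); last exact: edge_on_cat.
rewrite /simple_path (downhill_path_uniq iqvp) last_cat /= eqxx andbT.
by apply: sub_path iqvp => ? ? /andP[].
Qed.

(* Descend from the lower end of [e] to [j] and climb from its upper end to
   [i]; the potential strictly decreases along the concatenated walk. *)
Lemma flow_support (R : realFieldType) (x : 'cV[R]_n) i j e :
  laplacian R src tgt *m x = basis_vec R i - basis_vec R j ->
  x (src e) 0 != x (tgt e) 0 -> e \in path_edges src tgt i j.
Proof.
move=> Lx xe.
have Lx_at w : (laplacian R src tgt *m x) w 0 = (w == i)%:R - (w == j)%:R.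
  by rewrite Lx !mxE !andbT.
have Lx_ge0 w : w != j -> 0 <= (laplacian R src tgt *m x) w 0.
  by rewrite Lx_at => /negbTE ->; rewrite subr0 ler0n.
have Lx_le0 w : w != i -> (laplacian R src tgt *m x) w 0 <= 0.
  by rewrite Lx_at => /negbTE ->; rewrite sub0r oppr_le0 ler0n.
have [u [v [uv e_uv]]] : exists u v, downhill x u v /\
    ((u == src e) && (v == tgt e)) || ((u == tgt e) && (v == src e)).
  have e_adj : adjG (src e) (tgt e) by apply/existsP; exists e; rewrite !eqxx.
  case: (ltgtP (x (src e) 0) (x (tgt e) 0)) => [lt|gt|eq].
  - by exists (tgt e), (src e); rewrite !eqxx orbT /downhill lt adj_sym e_adj.
  - by exists (src e), (tgt e); rewrite !eqxx /downhill gt e_adj.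
  - by rewrite eq eqxx in xe.
exact: downhill_mem_path_edges (connect_downhill_source Lx_le0 uv) uv
  (connect_downhill_sink Lx_ge0 uv) e_uv.
Qed.

End Graph.

Lemma inf_norm_ge0 (R : realDomainType) m (x : 'cV[R]_m) : 0 <= inf_norm x.
Proof. by apply: (big_ind (>= 0)) => // a b a0 b0; rewrite le_max a0. Qed.

Lemma normr_le_inf_norm (R : realDomainType) m (x : 'cV[R]_m) k :
  `|x k 0| <= inf_norm x.
Proof. exact: le_bigmax. Qed.

Lemma dot_le_inf_norm_sqrt (R : rcfType) m (Delta f : 'cV[R]_m)
    (S : {set 'I_m}) :
  (forall e, f e 0 != 0 -> e \in S) ->
  `|\sum_e Delta e 0 * f e 0|
    <= inf_norm Delta * Num.sqrt ((\sum_e f e 0 ^+ 2) * #|S|%:R).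
Proof.
move=> f_supp.
have f0 e : e \notin S -> f e 0 = 0.
  by move=> eS; apply/eqP; apply: contraNT eS; apply: f_supp.
have sum_on_S (F : 'I_m -> R) : (forall e, e \notin S -> F e = 0) ->
    \sum_e F e = \sum_(e in S) F e.
  move=> F0; rewrite [RHS]big_mkcond.
  by apply: eq_bigr => e _; case: ifPn => // /F0.
rewrite !sum_on_S => [|e /f0 ->|e /f0 ->]; rewrite ?expr0n ?mulr0 //.
apply: (le_trans (ler_norm_sum _ _ _)).
apply: (@le_trans _ _ (\sum_(e in S) inf_norm Delta * `|f e 0|)).
  by apply: ler_sum => e _; rewrite normrM ler_wpM2r ?normr_le_inf_norm.
by rewrite -mulr_sumr ler_wpM2l ?inf_norm_ge0 // mulrC sum_norm_le_sqrt.
Qed.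

Theorem lemma4 (R : rcfType) (n m : nat) (src tgt : 'I_m -> 'I_n)
  (Ldag : 'M[R]_n) :
  simple_graph src tgt ->
  connected_graph src tgt ->
  is_MP_pinv (laplacian R src tgt) Ldag ->
  forall (Delta : 'cV[R]_m) (i j : 'I_n),
    `| (Delta^T *m (incidence R src tgt)^T *m Ldag
          *m (basis_vec R i - basis_vec R j)) 0 0 |
    <= inf_norm Delta
       * Num.sqrt (eff_res Ldag i j * (#|path_edges src tgt i j|)%:R).
Proof.
move=> _ connected [LXL _ LXsym _] Delta i j.
set B := incidence R src tgt; set L := laplacian R src tgt in LXL LXsym *.
set d := basis_vec R i - basis_vec R j.
set x := Ldag *m d; set f := B^T *m x.
have Lx : L *m x = d.
  rewrite mulmxA; apply: mulmx_pinv_id => // z.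
  by rewrite trmx_laplacian; apply: laplacian_ker_orth.
have eff : eff_res Ldag i j = \sum_e f e 0 ^+ 2.
  rewrite /eff_res -/d -mulmxA -/x -{1}Lx trmx_mul trmx_laplacian.
  by rewrite laplacian_quad dotmx_self.
have lhs : (Delta^T *m B^T *m Ldag *m d) 0 0 = \sum_e Delta e 0 * f e 0.
  by rewrite -!mulmxA -/x -/f mxE; apply: eq_bigr => e _; rewrite mxE.
rewrite lhs eff; apply: dot_le_inf_norm_sqrt => e.
by rewrite incidence_trmx_mulE subr_eq0; apply: flow_support Lx.
Qed.
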